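(* If TDS is decidable, then for every integer $k>2$ the membership problem of the middle-$k$th Cantor set (given a rational $t\in[0,1]$, decide whether $t$ belongs to the middle-$k$th Cantor set) is decidable.
   Context: An instance of TDS consists of a rational discount factor $0<\lambda<1$, a rational target $t$, and rational weights $a,b$; it asks whether there exists $w\in\{a,b\}^\omega$ with $\sum_{i=0}^\infty w(i)\lambda^i=t$. For an integer $k>2$, the middle-$k$th Cantor set is obtained by starting with $[0,1]$ and, at each step, removing from each remaining closed interval the open middle subinterval whose length is $\frac1k$ of that interval's length (leaving two closed intervals each of relative length $\frac{k-1}{2k}$); the set is the intersection of all stages. *)

(* Computability is modelled by an
   explicit model of computation: Kleene's partial mu-recursive functions. *)
From HB Require Import structures.
From mathcomp Require Import all_boot all_order all_algebra.
From mathcomp Require Import all_classical all_reals all_analysis.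
From mathcomp Require Import Rstruct Rstruct_topology.


Set Implicit Arguments.
Unset Strict Implicit.
Unset Printing Implicit Defensive.

Import Order.TTheory GRing.Theory Num.Theory.

Inductive code : Type :=
| CZero
| CSucc
| CProj of nat
| CComp of code & seq code
| CPrec of code & code
| CMu of code.

Inductive eval : code -> seq nat -> nat -> Prop :=
| ev_zero xs : eval CZero xs 0
| ev_succ xs : eval CSucc xs (head 0%N xs).+1
| ev_proj i xs : eval (CProj i) xs (nth 0%N xs i)
| ev_comp f gs xs ys y :
    evals gs xs ys -> eval f ys y -> eval (CComp f gs) xs y
| ev_prec0 f g xs y :
    eval f xs y -> eval (CPrec f g) (0%N :: xs) y
| ev_precS f g n xs r y :
    eval (CPrec f g) (n :: xs) r -> eval g (n :: r :: xs) y ->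
    eval (CPrec f g) (n.+1 :: xs) y
| ev_mu f xs n :
    eval f (n :: xs) 0%N ->
    (forall m, (m < n)%N -> exists r, eval f (m :: xs) r.+1) ->
    eval (CMu f) xs n
with evals : seq code -> seq nat -> seq nat -> Prop :=
| evs_nil xs : evals [::] xs [::]
| evs_cons g gs xs y ys :
    eval g xs y -> evals gs xs ys -> evals (g :: gs) xs (y :: ys).

Definition decidable_on (T : countType) (P : T -> Prop) : Prop :=
  exists c : code, forall x : T,
    (P x -> eval c [:: pickle x] 1%N) /\ (~ P x -> eval c [:: pickle x] 0%N).

Local Open Scope classical_set_scope.
Local Open Scope ring_scope.

Definition TDS (inst : rat * rat * rat * rat) : Prop :=
  let: (lam, t, a, b) := inst in
  0 < lam < 1 /\
  exists w : nat -> rat, (forall i, w i = a \/ w i = b) /\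
    (fun n : nat => \sum_(0 <= i < n) ((ratr (w i) : Rdefinitions.R) * (ratr lam : Rdefinitions.R) ^+ i))
      @ \oo --> (ratr t : Rdefinitions.R).

(* remove the open middle subinterval of relative length 1/k from [a, b] *)
Definition cantor_split (k : nat) (ab : Rdefinitions.R * Rdefinitions.R) : seq (Rdefinitions.R * Rdefinitions.R) :=
  let: (a, b) := ab in
  let l := (b - a) * ((k%:R - 1) / (2 * k%:R)) in
  [:: (a, a + l); (b - l, b)].

Fixpoint cantor_stage (k : nat) (n : nat) : seq (Rdefinitions.R * Rdefinitions.R) :=
  match n with
  | 0%N => [:: (0, 1)]
  | n'.+1 => flatten [seq cantor_split k ab | ab <- cantor_stage k n']
  end.

Definition cantor_set (k : nat) (x : Rdefinitions.R) : Prop :=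
  forall n : nat, exists2 ab, ab \in cantor_stage k n & ab.1 <= x <= ab.2.

Definition cantor_member (k : nat) (t : rat) : Prop := cantor_set k (ratr t).

From Pilot Require Import Defs.
From mathcomp Require Import all_boot all_order all_algebra.
From mathcomp Require Import all_classical all_reals all_analysis.
From mathcomp Require Import Rstruct Rstruct_topology.
From mathcomp Require Import ring lra.

(* With q := (k - 1) / (2 k), the cells of the n-th stage of the middle-kth
   Cantor set are the intervals [sum_{i<n} w_i q^i, sum_{i<n} w_i q^i + q^n]
   with digits w_i in {0, 1 - q}.  Since 2 q < 1 the cells of a stage are
   disjoint, so a point of the Cantor set determines a unique infinite digit
   sequence, and the point is the sum of the corresponding series.  Hence t
   lies in the set iff the TDS instance (q, t, 0, 1 - q) is positive, and
   this instance is computed from t by a primitive recursive program. *)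

Set Implicit Arguments.
Unset Strict Implicit.
Unset Printing Implicit Defensive.

Import Order.TTheory GRing.Theory Num.Theory numFieldNormedType.Exports.

Lemma eval_comp1 f a xs u y :
  Defs.eval a xs u -> Defs.eval f [:: u] y -> Defs.eval (CComp f [:: a]) xs y.
Proof. by move=> ha hf; apply: (ev_comp _ hf); do ![constructor]. Qed.

Lemma eval_comp2 f a b xs u v y :
  Defs.eval a xs u -> Defs.eval b xs v -> Defs.eval f [:: u; v] y ->
  Defs.eval (CComp f [:: a; b]) xs y.
Proof. by move=> ha hb hf; apply: (ev_comp _ hf); do ![constructor]. Qed.

Lemma eval_proj i xs y : nth 0%N xs i = y -> Defs.eval (CProj i) xs y.
Proof. by move=> <-; apply: ev_proj. Qed.

Fixpoint const_code (n : nat) : Defs.code :=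
  if n is n'.+1 then CComp CSucc [:: const_code n'] else CZero.

Lemma eval_const n xs : Defs.eval (const_code n) xs n.
Proof.
elim: n => [|n IHn]; first exact: ev_zero.
exact: eval_comp1 IHn (ev_succ [:: n]).
Qed.

Definition add_code : Defs.code := CPrec (CProj 0) (CComp CSucc [:: CProj 1]).

Lemma eval_add m n : Defs.eval add_code [:: m; n] (m + n).
Proof.
elim: m => [|m IHm]; first exact/ev_prec0/eval_proj.
apply: (ev_precS IHm).
by apply: (eval_comp1 (u := m + n)); [apply: eval_proj | apply: (ev_succ [:: _])].
Qed.

Definition mul_code : Defs.code := CPrec CZero (CComp add_code [:: CProj 2; CProj 1]).

Lemma eval_mul m n : Defs.eval mul_code [:: m; n] (m * n).
Proof.
elim: m => [|m IHm]; first exact: ev_prec0 (ev_zero _).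
apply: (ev_precS IHm); rewrite mulSn.
by apply: eval_comp2 (eval_add n (m * n)); apply: eval_proj.
Qed.

Definition exp2_code : Defs.code :=
  CPrec (const_code 1) (CComp add_code [:: CProj 1; CProj 1]).

Lemma eval_exp2 n : Defs.eval exp2_code [:: n] (2 ^ n).
Proof.
elim: n => [|n IHn]; first exact: ev_prec0 (eval_const 1 _).
apply: (ev_precS IHn); rewrite expnS mul2n -addnn.
by apply: eval_comp2 (eval_add _ _); apply: eval_proj.
Qed.

(* [CodeSeq.code [:: u; v] = 2 ^ u * (2 ^ v.+1).+1] is how [pickle] encodes pairs. *)
Definition pair_code (a b : Defs.code) : Defs.code :=
  CComp mul_code [:: CComp exp2_code [:: a];
                     CComp CSucc [:: CComp exp2_code [:: CComp CSucc [:: b]]]].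

Lemma eval_pair a b xs u v :
  Defs.eval a xs u -> Defs.eval b xs v ->
  Defs.eval (pair_code a b) xs (CodeSeq.code [:: u; v]).
Proof.
move=> ha hb; rewrite /CodeSeq.code /= muln1 -mul2n -expnS.
apply: eval_comp2 (eval_mul _ _); first exact: eval_comp1 ha (eval_exp2 u).
apply: eval_comp1 (ev_succ [:: 2 ^ v.+1]).
exact: eval_comp1 (eval_comp1 hb (ev_succ [:: v])) (eval_exp2 v.+1).
Qed.

Definition computable (T U : countType) (f : T -> U) : Prop :=
  exists c : Defs.code, forall x, Defs.eval c [:: pickle x] (pickle (f x)).

Lemma computable_id {T : countType} : computable (@id T).
Proof. by exists (CProj 0) => x; apply: eval_proj. Qed.

Lemma computable_cst {T U : countType} (y : U) : computable (fun _ : T => y).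
Proof. by exists (const_code (pickle y)) => x; apply: eval_const. Qed.

Lemma computable_pair (T U V : countType) (f : T -> U) (g : T -> V) :
  computable f -> computable g -> computable (fun x => (f x, g x)).
Proof.
by move=> [a ha] [b hb]; exists (pair_code a b) => x; apply: eval_pair.
Qed.

Lemma decidable_on_reduction (T U : countType) (P : T -> Prop) (Q : U -> Prop)
    (f : T -> U) :
  computable f -> (forall x, P x <-> Q (f x)) ->
  decidable_on Q -> decidable_on P.
Proof.
move=> [a ha] PQ [c hc]; exists (CComp c [:: a]) => x.
have [hQ hNQ] := hc (f x).
by split=> [/PQ Px | NPx]; apply: eval_comp1 (ha x) _; [apply: hQ | apply: hNQ => /PQ].
Qed.

Local Open Scope classical_set_scope.
Local Open Scope ring_scope.

Section CantorCells.
Variables (R : realFieldType) (q : R).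

Definition cantor_digit (b : bool) : R := if b then 1 - q else 0.

Definition cantor_left (s : seq bool) : R :=
  foldr (fun b x => cantor_digit b + q * x) 0 s.

Definition in_cell (x : R) (s : seq bool) : bool :=
  cantor_left s <= x <= cantor_left s + q ^+ size s.

Lemma cantor_left_cat s t :
  cantor_left (s ++ t) = cantor_left s + q ^+ size s * cantor_left t.
Proof.
elim: s => [|b s IHs] /=; first by rewrite expr0 mul1r add0r.
by rewrite IHs exprS; ring.
Qed.

Lemma cantor_left_rcons s b :
  cantor_left (rcons s b) = cantor_left s + q ^+ size s * cantor_digit b.
Proof. by rewrite -cats1 cantor_left_cat /= mulr0 addr0. Qed.

Lemma cantor_left_mkseq (d : nat -> bool) n :
  cantor_left (mkseq d n) = \sum_(0 <= i < n) cantor_digit (d i) * q ^+ i.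
Proof.
elim: n => [|n IHn]; first by rewrite big_geq.
rewrite /mkseq -addn1 iotaD map_cat /= cats1 -/(mkseq d n) cantor_left_rcons.
by rewrite size_mkseq IHn addn1 big_nat_recr //= mulrC.
Qed.

Lemma cantor_left_ge0 s : 0 <= q <= 1 -> 0 <= cantor_left s.
Proof.
case/andP=> q_ge0 q_le1; elim: s => [|b s IHs] //=.
by apply: addr_ge0; [case: b; rewrite /= ?subr_ge0 | apply: mulr_ge0].
Qed.

Lemma cantor_right_le1 s : 0 <= q <= 1 -> cantor_left s + q ^+ size s <= 1.
Proof.
move=> q01; have /andP[q_ge0 q_le1] := q01.
elim: s => [|b s IHs] /=; first by rewrite expr0 add0r.
have : q * (cantor_left s + q ^+ size s) <= q by rewrite ler_piMr.
rewrite exprS; case: b => /=; lra.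
Qed.

Lemma in_cell_take x s j : 0 <= q <= 1 -> in_cell x s -> in_cell x (take j s).
Proof.
move=> q01; have /andP[q_ge0 _] := q01.
rewrite /in_cell -{1 2 3}(cat_take_drop j s) cantor_left_cat size_cat exprD.
set u := take j s; set v := drop j s.
have qu_ge0 : 0 <= q ^+ size u by exact: exprn_ge0.
have := mulr_ge0 qu_ge0 (cantor_left_ge0 v q01).
have : q ^+ size u * (cantor_left v + q ^+ size v) <= q ^+ size u.
  by rewrite ler_piMr // cantor_right_le1.
move=> h1 h2 /andP[h3 h4]; apply/andP; split; lra.
Qed.

Lemma in_cell_cons x b s :
  0 < q -> in_cell x (b :: s) = in_cell ((x - cantor_digit b) / q) s.
Proof.
move=> q_gt0; rewrite /in_cell /= exprS.
have {1 2}-> : x = cantor_digit b + q * ((x - cantor_digit b) / q).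
  by field; rewrite gt_eqF.
by rewrite lerD2l -addrA -mulrDr lerD2l !ler_pM2l.
Qed.

Lemma in_cell_cons_bounds x b s :
  0 <= q <= 1 -> in_cell x (b :: s) -> cantor_digit b <= x <= cantor_digit b + q.
Proof.
move=> q01; have /andP[q_ge0 _] := q01.
rewrite /in_cell /= exprS -addrA -mulrDr => /andP[h1 h2].
have := mulr_ge0 q_ge0 (cantor_left_ge0 s q01).
have : q * (cantor_left s + q ^+ size s) <= q by rewrite ler_piMr // cantor_right_le1.
move=> h3 h4; apply/andP; split; lra.
Qed.

(* The two subcells of a cell are separated by a gap because [q < 1 - q]. *)
Lemma in_cell_uniq x s t : 0 < q -> 2 * q < 1 ->
  size s = size t -> in_cell x s -> in_cell x t -> s = t.
Proof.
move=> q_gt0 q_lt_half; have q01 : 0 <= q <= 1 by apply/andP; split; lra.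
elim: s t x => [|b s IHs] [|c t] x //= [st] xbs xct.
have bc : b = c.
  have := in_cell_cons_bounds q01 xbs; have := in_cell_cons_bounds q01 xct.
  by case: b c {xbs xct} => [] [] //= /andP[? ?] /andP[? ?]; lra.
rewrite -bc in xct *; rewrite in_cell_cons // in xbs; rewrite in_cell_cons // in xct.
by rewrite (IHs _ _ st xbs xct).
Qed.

End CantorCells.

Lemma in_cell_digits (R : realFieldType) (q x : R) : 0 < q -> 2 * q < 1 ->
  (forall n, exists2 s, size s = n & in_cell q x s) ->
  exists d : nat -> bool, forall n, in_cell q x (mkseq d n).
Proof.
move=> q_gt0 q_lt_half cells; have q01 : 0 <= q <= 1 by apply/andP; split; lra.
have cell_of n : exists s, (size s == n) && in_cell q x s.
  by have [s sn xs] := cells n; exists s; rewrite sn eqxx.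
pose S n := xchoose (cell_of n).
have S_spec n : size (S n) = n /\ in_cell q x (S n).
  by have /andP[/eqP] := xchooseP (cell_of n).
have S_take m n : (m <= n)%N -> take m (S n) = S m.
  move=> mn; have [sn xn] := S_spec n; have [sm xm] := S_spec m.
  apply: in_cell_uniq q_gt0 q_lt_half _ (in_cell_take m q01 xn) xm.
  by rewrite size_takel ?sn ?sm.
exists (fun i => nth false (S i.+1) i) => n; have [sn xn] := S_spec n.
suff -> : mkseq (fun i => nth false (S i.+1) i) n = S n by [].
apply: (@eq_from_nth _ false) => [|i]; first by rewrite size_mkseq sn.
by rewrite size_mkseq => lt_in; rewrite nth_mkseq // -(S_take i.+1 n lt_in) nth_take.
Qed.

Lemma cvg_cantor_leftP (R : archiRealFieldType) (q x : R) (d : nat -> bool) :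
  0 < q < 1 ->
  (forall n, in_cell q x (mkseq d n)) <->
  cantor_left q (mkseq d n) @[n --> \oo] --> x.
Proof.
move=> /andP[q_gt0 q_lt1]; have q01 : 0 <= q <= 1 by apply/andP; split; lra.
split=> [cells | left_cvg n].
- apply: (@squeeze_cvgr _ _ _ _ (fun n => x - q ^+ n) (fun=> x)).
  + near=> m; have /andP[] := cells m; rewrite size_mkseq => ? ?.
    by apply/andP; split; lra.
  + rewrite -[x in _ --> x]subr0; apply: cvgB; first exact: cvg_cst.
    by apply: cvg_expr; rewrite ger0_norm //; lra.
  + exact: cvg_cst.
- have take_mkseq m : (n <= m)%N -> take n (mkseq d m) = mkseq d n.
    by move=> nm; rewrite -map_take take_iota (minn_idPl nm).
  have cells_m m : (n <= m)%N -> in_cell q (cantor_left q (mkseq d m)) (mkseq d n).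
    move=> /take_mkseq <-; apply: in_cell_take q01 _.
    by rewrite /in_cell lexx lerDl exprn_ge0 //; lra.
  apply/andP; split.
  + by apply: (cvgr_to_ge left_cvg); exists n => // m /= /cells_m /andP[].
  + by apply: (cvgr_to_le left_cvg); exists n => // m /= /cells_m /andP[].
Unshelve. all: by end_near.
Qed.

Definition cantor_ratio {R : numFieldType} (k : nat) : R := (k%:R - 1) / (2 * k%:R).

Lemma ratr_cantor_ratio (R : numFieldType) k : ratr (cantor_ratio k) = cantor_ratio k :> R.
Proof. by rewrite fmorph_div rmorphB rmorphM rmorph1 !rmorph_nat. Qed.

Lemma cantor_ratio_gt0 (R : realFieldType) k : (2 < k)%N -> 0 < cantor_ratio k :> R.
Proof.
move=> k_gt2; have k_ge3 : 3 <= k%:R :> R by rewrite ler_nat.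
by rewrite divr_gt0 //; lra.
Qed.

Lemma cantor_ratio_lt_half (R : realFieldType) k :
  (2 < k)%N -> 2 * cantor_ratio k < 1 :> R.
Proof.
move=> k_gt2; have k_ge3 : 3 <= k%:R :> R by rewrite ler_nat.
rewrite /cantor_ratio mulrA ltr_pdivrMr ?mulr_gt0 //; lra.
Qed.

Local Notation RR := Rdefinitions.R.

Lemma cantor_stageP k n ab : ab \in cantor_stage k n <->
  exists2 s, size s = n & ab = (cantor_left (cantor_ratio k) s,
                                cantor_left (cantor_ratio k) s + cantor_ratio k ^+ n).
Proof.
set q : RR := cantor_ratio k.
have split_cell s : cantor_split k (cantor_left q s, cantor_left q s + q ^+ size s)
    = [seq (cantor_left q (rcons s b), cantor_left q (rcons s b) + q ^+ (size s).+1)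
      | b <- [:: false; true]].
  rewrite /= /cantor_split -[(k%:R - 1) / _]/q !cantor_left_rcons exprSr /=.
  by congr [:: (_, _); (_, _)]; ring.
split=> [|[s <- ->]].
- elim: n ab => [|n IHn] ab /=.
    by rewrite inE => /eqP ->; exists [::]; rewrite /= ?expr0 ?add0r.
  case/flatten_mapP=> _ /IHn[s <- ->]; rewrite split_cell => /mapP[b _ ->].
  by exists (rcons s b); rewrite ?size_rcons.
- elim/last_ind: s => [|s b IHs] /=; first by rewrite expr0 add0r inE.
  rewrite size_rcons /=; apply/flatten_mapP.
  exists (cantor_left q s, cantor_left q s + q ^+ size s) => //.
  by rewrite split_cell; apply/mapP; exists b => //; case: b.
Qed.

Lemma cantor_setP k x : (2 < k)%N ->
  cantor_set k x <-> exists d, forall n, in_cell (cantor_ratio k) x (mkseq d n).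
Proof.
move=> k_gt2; split=> [x_in | [d cells] n].
- apply: in_cell_digits; [exact: cantor_ratio_gt0 | exact: cantor_ratio_lt_half |].
  move=> n; have [_ /cantor_stageP[s sn ->] /= x_in_s] := x_in n.
  by exists s; rewrite /in_cell sn.
- set s := mkseq d n; have sn : size s = n by rewrite size_mkseq.
  exists (cantor_left (cantor_ratio k) s,
          cantor_left (cantor_ratio k) s + cantor_ratio k ^+ n).
    by apply/cantor_stageP; exists s.
  by have := cells n; rewrite /in_cell sn.
Qed.

Lemma ratr_cantor_digit (R : realFieldType) (r : rat) b :
  ratr (cantor_digit r b) = cantor_digit (ratr r) b :> R.
Proof. by case: b; rewrite /= ?rmorphB ?rmorph1 ?rmorph0. Qed.

Lemma TDS_cantorP (r t : rat) : 0 < r < 1 ->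
  TDS (r, t, 0, 1 - r) <->
  exists d, cantor_left (ratr r) (mkseq d n) @[n --> \oo] --> (ratr t : RR).
Proof.
move=> r01; have r_neq1 : 1 - r != 0 by rewrite subr_eq0 eq_sym lt_eqF //; case/andP: r01.
have partial_sums d :
    (fun n => \sum_(0 <= i < n) (ratr (cantor_digit r (d i)) : RR) * ratr r ^+ i)
    = (fun n => cantor_left (ratr r) (mkseq d n)).
  apply/funext => n; rewrite cantor_left_mkseq.
  by apply: eq_bigr => i _; rewrite ratr_cantor_digit.
split=> [[_ [w [w_digit w_cvg]]] | [d d_cvg]].
- have w_eq : w = fun i => cantor_digit r (w i != 0).
    by apply/funext => i; case: (w_digit i) => ->; rewrite ?eqxx ?r_neq1.
  rewrite w_eq in w_cvg.
  by exists (fun i => w i != 0); rewrite -partial_sums.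
- split=> //; exists (fun i => cantor_digit r (d i)); split; last by rewrite partial_sums.
  by move=> i; case: (d i); [right | left].
Qed.

Lemma cantor_member_TDS k t : (2 < k)%N ->
  cantor_member k t <-> TDS (cantor_ratio k, t, 0, 1 - cantor_ratio k).
Proof.
move=> k_gt2; have r01 : 0 < (cantor_ratio k : rat) < 1.
  by have := cantor_ratio_gt0 rat k_gt2; have := cantor_ratio_lt_half rat k_gt2; lra.
have q01 : 0 < (cantor_ratio k : RR) < 1.
  by have := cantor_ratio_gt0 RR k_gt2; have := cantor_ratio_lt_half RR k_gt2; lra.
apply: (iff_trans (cantor_setP _ k_gt2)); apply: iff_sym.
apply: (iff_trans (TDS_cantorP t r01)); rewrite ratr_cantor_ratio.
by split=> -[d d_cells]; exists d; apply/(cvg_cantor_leftP _ _ q01).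
Qed.

Theorem theorem34 :
  decidable_on TDS ->
  forall k : nat, (2 < k)%N -> decidable_on (cantor_member k).
Proof.
move=> TDS_dec k k_gt2.
pose r : rat := cantor_ratio k.
apply: (@decidable_on_reduction _ _ _ _ (fun t => (r, t, 0, 1 - r)) _ _ TDS_dec) => [|t].
  have r_t : computable (fun t : rat => (r, t)).
    exact: computable_pair (computable_cst r) computable_id.
  exact: computable_pair (computable_pair r_t (computable_cst 0)) (computable_cst (1 - r)).
exact: cantor_member_TDS.
Qed.
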